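(* Let $X$ be a connected, locally compact Polish space with a partial order $\le$ whose strict part is $<$, and suppose there is $M\subseteq X$ such that: (i) $M$ has at least two elements, is connected, and is totally ordered by $<$; (ii) for every $m\in M$ and every neighborhood $U$ of $m$ in $X$ there are $\underline m,\overline m\in M$ with $m\in[\underline m,\overline m]\subseteq U$, where moreover $\overline m$ can be chosen with $m<\overline m$ if $m$ is not the largest element of $M$, and $\underline m$ can be chosen with $\underline m<m$ if $m$ is not the smallest element of $M$; (iii) for every bounded sequence $(x_n)$ in $X$ there are $\underline m,\overline m\in M$ with $\underline m\le x_n\le\overline m$ for all sufficiently large $n$. Let $\mathcal{U}$ be the set of continuous strictly increasing functions $X\to\mathbb{R}$ with the topology of uniform convergence on compact sets, and $\mathcal{R}^{\mathrm{mon}}$ the set of continuous strictly monotone preferences on $X$ with the topology of closed convergence. Define $\Phi:\mathcal{U}\to\mathcal{R}^{\mathrm{mon}}$ by $x\mathrel{\Phi(u)}y$ iff $u(x)\ge u(y)$. Then $\Phi$ is an open map.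
   Context: $[\underline m,\overline m]=\{z\in X:\underline m\le z\le\overline m\}$. A function $u$ is strictly increasing if $x<y$ implies $u(x)<u(y)$. A preference is a complete transitive binary relation; continuous if closed in $X\times X$; strictly monotone if $y<x$ implies $x\succ y$. Closed convergence on closed subsets of $X\times X$: $F^n\to F$ iff $F$ equals both the set of points every neighborhood of which meets $F^n$ for all large $n$, and the set of points every neighborhood of which meets $F^n$ for infinitely many $n$. Boundedness in (iii) refers to a metric compatible with the topology of $X$. *)

From HB Require Import structures.
From mathcomp Require Import all_boot all_order all_algebra.
From mathcomp Require Import all_classical all_reals all_analysis.
From mathcomp Require Import Rstruct Rstruct_topology.
From Stdlib Require Import Rdefinitions.
Import Order.TTheory GRing.Theory Num.Theory.
Set Implicit Arguments. Unset Strict Implicit. Unset Printing Implicit Defensive.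
Local Open Scope classical_set_scope.
Local Open Scope ring_scope.

Section Defs.
Variable X : topologicalType.

Definition is_metric (d : X -> X -> R) : Prop :=
  (forall x y, d x y = 0 <-> x = y) /\ (forall x y, d x y = d y x) /\
  (forall x y z, d x z <= d x y + d y z).

Definition compatible_metric (d : X -> X -> R) : Prop :=
  is_metric d /\
  forall A : set X, open A <->
    (forall x, A x -> exists2 e : R, 0 < e & [set y | d x y < e] `<=` A).

Definition metric_complete (d : X -> X -> R) : Prop :=
  forall x : nat -> X,
    (forall e : R, 0 < e -> exists N : nat, forall m n, leq N m -> leq N n ->
        d (x m) (x n) < e) ->
    exists l : X, x n @[n --> \oo] --> l.

Definition separable_space : Prop :=
  exists D : set X, countable D /\ closure D = setT.

Definition polish_space : Prop :=
  separable_space /\ exists d, compatible_metric d /\ metric_complete d.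

Definition bounded_seq (d : X -> X -> R) (x : nat -> X) : Prop :=
  exists x0 (r : R), forall n, d x0 (x n) <= r.

Definition partial_order (le : X -> X -> Prop) : Prop :=
  (forall x, le x x) /\ (forall x y, le x y -> le y x -> x = y) /\
  (forall x y z, le x y -> le y z -> le x z).

Definition lt_of (le : X -> X -> Prop) (x y : X) : Prop := le x y /\ x <> y.

Definition order_interval (le : X -> X -> Prop) (a b : X) : set X :=
  [set z | le a z /\ le z b].

Definition strictly_increasing (le : X -> X -> Prop) (u : X -> R) : Prop :=
  forall x y, lt_of le x y -> u x < u y.

Definition Uset (le : X -> X -> Prop) : set (X -> R) :=
  [set u | continuous u /\ strictly_increasing le u].

Definition U_open (le : X -> X -> Prop) (O : set (X -> R)) : Prop :=
  O `<=` Uset le /\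
  forall u, O u -> exists K : set X, compact K /\
    exists2 e : R, 0 < e &
      forall v, Uset le v -> (forall x, K x -> `|v x - u x| < e) -> O v.

(* preferences as subsets of X * X (x pref y iff (x,y) in P) *)
Definition preference (P : set (X * X)) : Prop :=
  (forall x y, P (x, y) \/ P (y, x)) /\
  (forall x y z, P (x, y) -> P (y, z) -> P (x, z)).

Definition strict_pref (P : set (X * X)) (x y : X) : Prop :=
  P (x, y) /\ ~ P (y, x).

Definition Rmon (le : X -> X -> Prop) : set (set (X * X)) :=
  [set P | preference P /\ closed P /\
           forall x y, lt_of le y x -> strict_pref P x y].

Definition lower_limit (F : nat -> set (X * X)) : set (X * X) :=
  [set p | forall V, nbhs p V -> exists N : nat, forall n, leq N n -> F n `&` V !=set0].

Definition upper_limit (F : nat -> set (X * X)) : set (X * X) :=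
  [set p | forall V, nbhs p V -> forall N : nat, exists2 n, leq N n & F n `&` V !=set0].

Definition closed_conv (F : nat -> set (X * X)) (G : set (X * X)) : Prop :=
  G = lower_limit F /\ G = upper_limit F.

(* topology of closed convergence on Rmon, given by its convergent sequences
   (sequentially open sets; this space is metrizable) *)
Definition R_open (le : X -> X -> Prop) (S : set (set (X * X))) : Prop :=
  S `<=` Rmon le /\
  forall G, S G -> forall F : nat -> set (X * X), (forall n, Rmon le (F n)) ->
    closed_conv F G -> exists N : nat, forall n, leq N n -> S (F n).

Definition Phi (u : X -> R) : set (X * X) := [set p | u p.2 <= u p.1].

End Defs.

From HB Require Import structures.
From mathcomp Require Import all_boot all_order all_algebra.
From mathcomp Require Import all_classical all_reals all_analysis.
From mathcomp Require Import Rstruct Rstruct_topology.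
From Stdlib Require Import Rdefinitions.
Import Order.TTheory GRing.Theory Num.Theory.
Local Open Scope classical_set_scope.
Local Open Scope ring_scope.

(* Since M is a connected chain that brackets every point (by (iii) for
   constant sequences), every x is indifferent, for a continuous monotone
   preference Q, to some r_Q(x) = indiff_rep Q x in M; by (ii) and the
   closedness of Q the map r_Q is continuous, so u o r_Q is a continuous
   strictly increasing utility representing Q.  If Q_n converges to Phi(u)
   (only the upper limit matters), then (ii) and compactness show that
   u o r_{Q_n} converges to u uniformly on compact sets; hence
   Q_n = Phi(u o r_{Q_n}) eventually lies in Phi(O) whenever O is a
   neighbourhood of u. *)

Lemma continuous_pairl {T U : topologicalType} (y : U) :
  continuous (fun x : T => (x, y)).
Proof. by move=> x; apply: cvg_pair; [exact: cvg_id | exact: cvg_cst]. Qed.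

Lemma continuous_pairr {T U : topologicalType} (x : T) :
  continuous (fun y : U => (x, y)).
Proof. by move=> y; apply: cvg_pair; [exact: cvg_cst | exact: cvg_id]. Qed.

Lemma connected_closed_cover {T : topologicalType} {C A B : set T} :
  connected C -> closed A -> closed B -> C `<=` A `|` B ->
  C `&` A !=set0 -> C `&` B !=set0 -> C `&` (A `&` B) !=set0.
Proof.
move=> cC clA clB CAB CA0 [b [Cb Bb]]; apply: contrapT => /nonemptyPn CAB0.
have CA_open : C `&` A = C `&` ~` B.
  apply/seteqP; split => x [Cx Ax]; split => //.
    by move=> Bx; have : (C `&` (A `&` B)) x by []; rewrite CAB0.
  by case: (CAB x Cx).
have CAC : C `&` A = C.
  apply: cC => //; last by exists A.
  by exists (~` B); [exact: closed_openC | exact: CA_open].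
have [_ Ab] : (C `&` A) b by rewrite CAC.
by have : (C `&` (A `&` B)) b by []; rewrite CAB0.
Qed.

Section MonotonePreference.
Context {X : topologicalType} {le : X -> X -> Prop} {Q : set (X * X)}.
Hypothesis HQ : Rmon le Q.

Lemma Rmon_total x y : Q (x, y) \/ Q (y, x).
Proof. by case: HQ => -[]. Qed.

Lemma Rmon_refl x : Q (x, x).
Proof. by case: (Rmon_total x x). Qed.

Lemma Rmon_trans {x y z} : Q (x, y) -> Q (y, z) -> Q (x, z).
Proof. by case: HQ => -[_ tr] _; exact: tr. Qed.

Lemma Rmon_closed : closed Q.
Proof. by case: HQ => _ []. Qed.

Lemma Rmon_lt {x y} : lt_of le y x -> Q (x, y) /\ ~ Q (y, x).
Proof. by case: HQ => _ [_ sm]; exact: sm. Qed.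

Lemma Rmon_le {x y} : le y x -> Q (x, y).
Proof.
move=> yx; have [<-|xy] := pselect (y = x); first exact: Rmon_refl.
by have [] := Rmon_lt (conj yx xy).
Qed.

Lemma Rmon_closed_sectionl y : closed [set x | Q (x, y)].
Proof.
exact: (continuous_closedP _).1 (@continuous_pairl X X y) Q Rmon_closed.
Qed.

Lemma Rmon_closed_sectionr x : closed [set y | Q (x, y)].
Proof.
exact: (continuous_closedP _).1 (@continuous_pairr X X x) Q Rmon_closed.
Qed.

End MonotonePreference.

Lemma Phi_Rmon {X : topologicalType} {le : X -> X -> Prop} {u : X -> R} :
  Uset le u -> Rmon le (Phi u).
Proof.
move=> [cu su]; split; [split|split].
- move=> x y; rewrite /Phi /=.
  by case: (leP (u x) (u y)) => h; [right | left; exact: ltW].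
- by move=> x y z /= h1 h2; exact: le_trans h2 h1.
- have -> : Phi u = (fun p : X * X => u p.2 - u p.1) @^-1` [set r | r <= 0].
    by apply/seteqP; split => p /=; rewrite subr_le0.
  have cf : continuous (fun p : X * X => u p.2 - u p.1).
    move=> [a b]; apply: (@cvgB R R^o).
    + by apply: cvg_comp; [exact: cvg_snd | exact: cu].
    + by apply: cvg_comp; [exact: cvg_fst | exact: cu].
  exact: (continuous_closedP _).1 cf _ (@closed_le R 0).
- by move=> x y /su uyx; split => /=; [exact: ltW | rewrite /Phi /= leNgt uyx].
Qed.

Lemma strictly_increasing_le {X : topologicalType} {le : X -> X -> Prop}
    {u : X -> R} {x y} :
  strictly_increasing le u -> le x y -> u x <= u y.
Proof. by move=> su xy; have [->//|nxy] := pselect (x = y); exact/ltW/su. Qed.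

Lemma not_upper_limit_near {X : topologicalType} {F : nat -> set (X * X)} {p} :
  ~ upper_limit F p -> \forall q \near p & n \near \oo, ~ F n q.
Proof.
move=> notp; apply: contrapT => nearF; apply: notp => V pV N.
apply: contrapT => noF; apply: nearF.
exists (V, [set n | leq N n]) => [|[q n] /= [Vq Nn] Fq].
  by split => //; exact: nbhs_infty_ge.
by apply: noF; exists n => //; exists q.
Qed.

Lemma not_upper_limit_near_comp {X : topologicalType} {F : nat -> set (X * X)}
    {f : X -> X * X} {x} :
  {for x, continuous f} -> ~ upper_limit F (f x) ->
  \forall y \near x & n \near \oo, ~ F n (f y).
Proof.
move=> fx /not_upper_limit_near nearF.
have fst_f : (fun y : X * nat => f y.1) @ filter_prod (nbhs x) \oo --> f x.
  by apply: cvg_comp; [exact: cvg_fst | exact: fx].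
exact: (cvg_pair fst_f cvg_snd) _ nearF.
Qed.

Section IndifferenceRepresentative.
Context {X : topologicalType} {le : X -> X -> Prop} {M : set X}.
Hypothesis le_reflexive : forall x, le x x.
Hypothesis le_transitive : forall {x y z}, le x y -> le y z -> le x z.
Hypothesis M_total :
  forall {a b}, M a -> M b -> lt_of le a b \/ a = b \/ lt_of le b a.
Hypothesis M_connected : connected M.
Hypothesis M_bounds : forall x, exists ml mh, M ml /\ M mh /\ le ml x /\ le x mh.
Hypothesis M_local : forall {m}, M m -> forall {U}, nbhs m U ->
  exists ml mh, M ml /\ M mh /\ order_interval le ml mh m /\
    order_interval le ml mh `<=` U /\
    ((exists z, M z /\ ~ le z m) -> lt_of le m mh) /\
    ((exists z, M z /\ ~ le m z) -> lt_of le ml m).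

Lemma Rmon_M_le {Q a b} : Rmon le Q -> M a -> M b -> Q (a, b) -> le b a.
Proof.
move=> HQ Ma Mb Qab.
case: (M_total Ma Mb) => [/(Rmon_lt HQ) [_ /(_ Qab)] //|[->|[] //]].
exact: le_reflexive.
Qed.

Lemma M_le_of_utility {u a b} : strictly_increasing le u -> M a -> M b ->
  u a <= u b -> le a b.
Proof.
move=> su Ma Mb uab; case: (M_total Ma Mb) => [[] //|[->|/su]].
  exact: le_reflexive.
by rewrite ltNge uab.
Qed.

Definition indifferent (Q : set (X * X)) (x m : X) := M m /\ Q (m, x) /\ Q (x, m).

Lemma exists_indifferent {Q} x : Rmon le Q -> exists m, indifferent Q x m.
Proof.
move=> HQ; have [ml [mh [Mml [Mmh [mlx xmh]]]]] := M_bounds x.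
have : M `&` ([set m | Q (m, x)] `&` [set m | Q (x, m)]) !=set0.
  apply: (connected_closed_cover M_connected (Rmon_closed_sectionl HQ x)
    (Rmon_closed_sectionr HQ x)).
  - by move=> m _; case: (Rmon_total HQ m x); [left | right].
  - by exists mh; split => //; exact: (Rmon_le HQ xmh).
  - by exists ml; split => //; exact: (Rmon_le HQ mlx).
by case=> m [Mm [Qmx Qxm]]; exists m.
Qed.

Definition indiff_rep (Q : set (X * X)) (x : X) : X := xget x (indifferent Q x).

Lemma indiff_repP {Q} x : Rmon le Q -> indifferent Q x (indiff_rep Q x).
Proof. by move=> HQ; apply: xgetPex; exact: exists_indifferent. Qed.

Lemma indiff_rep_lt {Q x m} : Rmon le Q -> M m -> ~ Q (x, m) ->
  lt_of le (indiff_rep Q x) m.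
Proof.
move=> HQ Mm xm; have [Mr [_ Qxr]] := indiff_repP x HQ.
case: (M_total Mr Mm) => [//|[rm|/(Rmon_lt HQ) [mr _]]]; exfalso; apply: xm.
- by rewrite -rm.
- exact: (Rmon_trans HQ Qxr mr).
Qed.

Lemma indiff_rep_gt {Q x m} : Rmon le Q -> M m -> ~ Q (m, x) ->
  lt_of le m (indiff_rep Q x).
Proof.
move=> HQ Mm mx; have [Mr [Qrx _]] := indiff_repP x HQ.
case: (M_total Mm Mr) => [//|[mr|/(Rmon_lt HQ) [rm _]]]; exfalso; apply: mx.
- by rewrite mr.
- exact: (Rmon_trans HQ rm Qrx).
Qed.

Lemma near_indiff_rep {Y : Type} {FF : set_system Y} {FF_filter : Filter FF}
    (G : Y -> set (X * X)) (pt : Y -> X) {m U} :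
  (forall y, Rmon le (G y)) -> M m -> nbhs m U ->
  (forall mh, M mh -> lt_of le m mh -> \forall y \near FF, ~ G y (pt y, mh)) ->
  (forall ml, M ml -> lt_of le ml m -> \forall y \near FF, ~ G y (ml, pt y)) ->
  \forall y \near FF, U (indiff_rep (G y) (pt y)).
Proof.
move=> HG Mm Um above below.
have [ml [mh [Mml [Mmh [[mlm mmh] [sub [top bot]]]]]]] := M_local Mm Um.
have le_mh : \forall y \near FF, le (indiff_rep (G y) (pt y)) mh.
  have [Mtop|Mnotop] := pselect (exists z, M z /\ ~ le z m).
    apply: filterS (above _ Mmh (top Mtop)) => y.
    by move=> /(indiff_rep_lt (HG y) Mmh) [].
  apply: nearW => y; apply: le_transitive mmh.
  apply: contrapT => rm; apply: Mnotop.
  by exists (indiff_rep (G y) (pt y)); have [] := indiff_repP (pt y) (HG y).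
have ge_ml : \forall y \near FF, le ml (indiff_rep (G y) (pt y)).
  have [Mbot|Mnobot] := pselect (exists z, M z /\ ~ le m z).
    apply: filterS (below _ Mml (bot Mbot)) => y.
    by move=> /(indiff_rep_gt (HG y) Mml) [].
  apply: nearW => y; apply: le_transitive mlm _.
  apply: contrapT => mr; apply: Mnobot.
  by exists (indiff_rep (G y) (pt y)); have [] := indiff_repP (pt y) (HG y).
by apply: filterS2 ge_ml le_mh => y rml rmh; apply: sub.
Qed.

Lemma continuous_indiff_rep {Q} : Rmon le Q -> continuous (indiff_rep Q).
Proof.
move=> HQ x U Ur; have [Mr [Qrx Qxr]] := indiff_repP x HQ.
apply: (near_indiff_rep (fun=> Q) id (fun=> HQ) Mr Ur).
- move=> mh Mmh /(Rmon_lt HQ) [_ not_rmh].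
  have xmh : ~ Q (x, mh) by move=> /(Rmon_trans HQ Qrx)/not_rmh.
  exact: open_nbhs_nbhs (conj (closed_openC (Rmon_closed_sectionl HQ mh)) xmh).
- move=> ml Mml /(Rmon_lt HQ) [_ not_mlr].
  have mlx : ~ Q (ml, x) by move=> /(Rmon_trans HQ)/(_ Qxr)/not_mlr.
  exact: open_nbhs_nbhs (conj (closed_openC (Rmon_closed_sectionr HQ ml)) mlx).
Qed.

Lemma Uset_comp_indiff_rep {u Q} :
  Uset le u -> Rmon le Q -> Uset le (u \o indiff_rep Q).
Proof.
move=> [cu su] HQ; split.
  by move=> x; exact: continuous_comp (continuous_indiff_rep HQ x) (cu _).
move=> x y xy; apply: su; have [Mr [_ Qxr]] := indiff_repP x HQ.
apply: (indiff_rep_gt HQ Mr) => /(Rmon_trans HQ Qxr).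
by have [] := Rmon_lt HQ xy.
Qed.

Lemma Phi_comp_indiff_rep {u Q} : strictly_increasing le u -> Rmon le Q ->
  Phi (u \o indiff_rep Q) = Q.
Proof.
move=> su HQ; apply/seteqP; split => -[x y]; rewrite /Phi /=;
  have [Mx [Qrx Qxr]] := indiff_repP x HQ;
  have [My [Qry Qyr]] := indiff_repP y HQ.
- move=> /(M_le_of_utility su My Mx) /(Rmon_le HQ) rxy.
  exact: (Rmon_trans HQ Qxr (Rmon_trans HQ rxy Qry)).
- move=> Qxy; apply: (strictly_increasing_le su).
  apply: (Rmon_M_le HQ Mx My).
  exact: (Rmon_trans HQ Qrx (Rmon_trans HQ Qxy Qyr)).
Qed.

Lemma near_indiff_rep_uniform {u} {F : nat -> set (X * X)} {K : set X} {e : R} :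
  Uset le u -> (forall n, Rmon le (F n)) -> upper_limit F `<=` Phi u ->
  compact K -> 0 < e ->
  \forall n \near \oo, forall x, K x -> `|u (indiff_rep (F n) x) - u x| < e.
Proof.
move=> [cu su] HF Fu cK e0; have HPhi := Phi_Rmon (conj cu su).
apply: (compact_near_coveringP K).1 cK _ \oo
  (fun n x => `|u (indiff_rep (F n) x) - u x| < e) _ _ => x0 _.
set m := indiff_rep (Phi u) x0; have [Mm [mx0 x0m]] := indiff_repP x0 HPhi.
have um : u m = u x0 by apply/eqP; rewrite eq_le x0m mx0.
have e2 : 0 < e / 2 by rewrite divr_gt0.
have near_m : nbhs m (u @^-1` ball (u x0) (e / 2)).
  by rewrite -um; exact: cu m _ (nbhsx_ballx _ _ e2).
have near_rep : \forall x \near x0 & n \near \oo,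
    ball (u x0) (e / 2) (u (indiff_rep (F n) x)).
  apply: (near_indiff_rep (FF := filter_prod (nbhs x0) \oo) (fun y => F y.2) fst
    (fun y => HF y.2) Mm near_m).
  - move=> mh Mmh /su mmh.
    apply: (not_upper_limit_near_comp (continuous_pairl mh x0)).
    by move=> /Fu; rewrite /Phi /= leNgt -um mmh.
  - move=> ml Mml /su mlm.
    apply: (not_upper_limit_near_comp (continuous_pairr ml x0)).
    by move=> /Fu; rewrite /Phi /= leNgt -um mlm.
have near_x0 : \forall x \near x0 & n \near \oo, ball (u x0) (e / 2) (u x).
  exists (u @^-1` ball (u x0) (e / 2), setT) => [|[x n] [] //].
  by split; [exact: cu x0 _ (nbhsx_ballx _ _ e2) | exact: filterT].
apply: filterS2 near_x0 near_rep => -[x n] /= ux urx.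
by rewrite distrC; exact: ball_splitr ux urx.
Qed.

Lemma Phi_open O : U_open le O -> R_open le (@Phi X @` O).
Proof.
move=> [OU Onear]; split=> [_ [u /OU Uu <-]|_ [u Ou <-] F HF [_ Fup]].
  exact: Phi_Rmon.
have [K [cK [e e0 Ke]]] := Onear u Ou.
have Fu : upper_limit F `<=` Phi u by rewrite -Fup.
have [N _ closeN] := near_indiff_rep_uniform (OU u Ou) HF Fu cK e0.
exists N => n Nn; exists (u \o indiff_rep (F n)); last first.
  exact: (Phi_comp_indiff_rep (OU u Ou).2 (HF n)).
apply: Ke => [|x Kx]; first exact: (Uset_comp_indiff_rep (OU u Ou) (HF n)).
exact: closeN.
Qed.

End IndifferenceRepresentative.

Theorem theorem8 (X : topologicalType) (le : X -> X -> Prop) (M : set X)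
  (d : X -> X -> R) :
  connected [set: X] ->
  locally_compact [set: X] ->
  polish_space X ->
  compatible_metric d ->
  partial_order le ->
  (* (i) *)
  (exists a b, M a /\ M b /\ a <> b) ->
  connected M ->
  (forall a b, M a -> M b -> lt_of le a b \/ a = b \/ lt_of le b a) ->
  (* (ii) *)
  (forall m, M m -> forall U, nbhs m U ->
     exists ml mh, M ml /\ M mh /\ order_interval le ml mh m /\
       order_interval le ml mh `<=` U /\
       ((exists z, M z /\ ~ le z m) -> lt_of le m mh) /\
       ((exists z, M z /\ ~ le m z) -> lt_of le ml m)) ->
  (* (iii) *)
  (forall x : nat -> X, bounded_seq d x ->
     exists ml mh, M ml /\ M mh /\
       exists N : nat, forall n, leq N n -> le ml (x n) /\ le (x n) mh) ->
  forall O : set (X -> R), U_open le O -> R_open le (@Phi X @` O).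
Proof.
move=> _ _ _ _ [le_refl [_ le_trans]] _ M_conn M_total M_local M_bounded.
apply: (Phi_open le_refl le_trans M_total M_conn _ M_local) => x.
have [|ml [mh [Mml [Mmh [N xN]]]]] := M_bounded (fun=> x).
  by exists x, (d x x).
by exists ml, mh; have [] := xN N (leqnn N).
Qed.
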